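(* Let $m\ge0$ be an integer and write $s_n=s_n^{(1,m+2)}$. Then for all $n\ge0$, \[ s_n^2=s_n+2\sum_{k=0}^{n-m-2}\sum_{r=m+2}^{n-k}P_{r-1}^{\{-2,-1,m\}}s_k s_{n-k-r}^2 . \]
   Context: For positive integers $p<q$, $s_n^{(p,q)}$ is defined by $s_n^{(p,q)}=\delta_{0,n}+s_{n-p}^{(p,q)}+s_{n-q}^{(p,q)}$ for $n\ge0$ and $s_n^{(p,q)}=0$ for $n<0$. $\delta_{i,j}$ is $1$ if $i=j$ and $0$ otherwise. For a finite set $W$ of integers, $P_n^W$ is the number of permutations $\pi$ of $\{1,\dots,n\}$ with $\pi(i)-i\in W$ for all $i$ (the permanent of the $n\times n$ $(0,1)$ Toeplitz matrix whose $(i,j)$ entry is $1$ iff $j-i\in W$), with $P_0^W=1$. Empty sums are $0$. *)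

From mathcomp Require Import all_boot all_order all_algebra all_fingroup.
Set Implicit Arguments. Unset Strict Implicit. Unset Printing Implicit Defensive.
Import GRing.Theory Num.Theory.

(* Fuel-based definition of s_n^{(p,q)}:
   s_n = [n = 0] + s_{n-p} + s_{n-q}, with s_n = 0 for n < 0. *)
Fixpoint s_fuel (p q fuel n : nat) : nat :=
  match fuel with
  | 0 => (n == 0)%N
  | fuel'.+1 =>
      ((n == 0)%N + (if (p <= n)%N then s_fuel p q fuel' (n - p) else 0)
                 + (if (q <= n)%N then s_fuel p q fuel' (n - q) else 0))%N
  end.

(* For p >= 1 the fuel n.+1 is sufficient. *)
Definition sseq (p q n : nat) : nat := s_fuel p q n.+1 n.

(* P_n^W : number of permutations pi of {0,...,n-1} with pi(i) - i in W
   (equivalently of {1,...,n}, since only differences matter). *)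
Definition Pperm (W : seq int) (n : nat) : nat :=
  #|[set sigma : 'S_n | [forall i : 'I_n, ((sigma i)%:Z - (i : nat)%:Z)%R \in W]]|.

(* Let q = m + 2 and s = s^(1,q), so that s_(n+1) = s_n + s_(n+1-q).  Squaring,
   s_(n+1)^2 = s_n^2 + s_(n+1-q)^2 + 2 s_n s_(n+1-q), so s^2 - s obeys the recurrence
   of s with forcing term 2 s_n s_(n+1-q) and is therefore twice the convolution of s
   with it.  The cross term is expanded in squares: for the family F given by
   F_x(0) = [x = 0] and F_x(L+1) = F_(x-1)(L) + [x <= L] F_(m-x)(L-x), induction on c
   with the recurrence of s gives s_(c-x) s_(c+1) = sum_L F_x(L) s_(c-L)^2 for x <= m,
   and F_0(L+1) = F_m(L).  Finally F_0(N) = P_N: when a permutation with steps in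
   {-2,-1,m} is filled position by position, the set of used values has, up to forced
   moves, only two possible shapes, and the choices at each position reproduce the
   recursion of F. *)

From mathcomp Require Import all_boot all_order all_algebra all_fingroup.
From mathcomp Require Import zify.
Set Implicit Arguments. Unset Strict Implicit. Unset Printing Implicit Defensive.

Lemma s_fuel_stable p q f1 f2 n : 0 < p -> 0 < q -> n < f1 -> n < f2 ->
  s_fuel p q f1 n = s_fuel p q f2 n.
Proof.
move=> p0 q0; elim: f1 f2 n => [|f1 IH] [|f2] n //= h1 h2.
by congr (_ + _ + _); case: ifP => // hn; apply: IH; lia.
Qed.

Lemma sseqE p q n : 0 < p -> 0 < q ->
  sseq p q n = (n == 0) + (if p <= n then sseq p q (n - p) else 0)
                        + (if q <= n then sseq p q (n - q) else 0).
Proof.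
move=> p0 q0; rewrite [LHS]/sseq [LHS]/=.
by congr (_ + _ + _); case: ifP => // hn; apply: s_fuel_stable; lia.
Qed.

Fixpoint Pstate_fuel (m fuel x L : nat) : nat :=
  match fuel, L with
  | 0, _ => 0
  | f.+1, 0 => x == 0
  | f.+1, L'.+1 => (if x is x'.+1 then Pstate_fuel m f x' L' else 0)
                  + (if x <= L' then Pstate_fuel m f (m - x) (L' - x) else 0)
  end.

Definition Pstate m x L := Pstate_fuel m L.+1 x L.

Lemma Pstate_fuel_stable m f1 f2 x L : L < f1 -> L < f2 ->
  Pstate_fuel m f1 x L = Pstate_fuel m f2 x L.
Proof.
elim: f1 f2 x L => [|f1 IH] [|f2] x [|L] //= h1 h2.
congr (_ + _); first by case: x => // x; apply: IH; lia.
by case: ifP => // h; apply: IH; lia.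
Qed.

Lemma Pstate0 m x : Pstate m x 0 = (x == 0).
Proof. by []. Qed.

Lemma PstateS m x L : Pstate m x L.+1 =
  (if x is x'.+1 then Pstate m x' L else 0)
  + (if x <= L then Pstate m (m - x) (L - x) else 0).
Proof.
have unfold1 f : Pstate_fuel m f.+1 x L.+1 =
    (if x is x'.+1 then Pstate_fuel m f x' L else 0)
    + (if x <= L then Pstate_fuel m f (m - x) (L - x) else 0) by [].
rewrite /Pstate unfold1 {unfold1}; congr (_ + _).
by case: ifP => // h; apply: Pstate_fuel_stable; lia.
Qed.

Lemma Pstate0S m L : Pstate m 0 L.+1 = Pstate m m L.
Proof. by rewrite PstateS !subn0. Qed.

Lemma Pstate_small m x L : L < x -> Pstate m x L = 0.
Proof.
elim: L x => [|L IH] [|x] // h.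
by rewrite PstateS IH //; case: ifP => //; lia.
Qed.

Lemma big_nat_shift a b (F : nat -> nat) :
  \sum_(a <= i < b) F i = \sum_(0 <= i < b - a) F (i + a).
Proof. by rewrite -{1}[a]add0n big_addn. Qed.

Section SquareIdentity.
Variable m : nat.
Local Notation s := (sseq 1 (m + 2)).

Lemma s0 : s 0 = 1.
Proof. by rewrite sseqE // addn2. Qed.

Lemma sS n : s n.+1 = s n + (if m + 2 <= n.+1 then s (n.+1 - (m + 2)) else 0).
Proof. by rewrite sseqE ?addn2 // subn1 add0n. Qed.

Lemma mul_s_Pstate c x : x <= m -> x <= c ->
  s (c - x) * s c.+1 = \sum_(0 <= L < c.+1) Pstate m x L * s (c - L) ^ 2.
Proof.
elim/ltn_ind: c x => c IH x xm xc.
rewrite big_nat_recl // Pstate0 subn0.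
under eq_bigr do rewrite PstateS mulnDl.
rewrite big_split /= sS mulnDr addnA; congr (_ + _).
  case: x xm xc => [|x] xm xc.
    by rewrite big1 ?addn0 ?subn0 ?eqxx ?mul1n ?mulnn.
  case: c IH xc => [|c] IH xc; first lia.
  by rewrite (_ : (x.+1 == 0) = false) // mul0n add0n; apply: IH; lia.
rewrite (big_cat_nat _ (n := x)) //= big1_seq ?add0n; last first.
  by move=> L; rewrite mem_iota => /andP[_ hL]; case: ifP => //; lia.
rewrite big_nat_shift; case: ifP => hc; last first.
  rewrite muln0 big1_seq // => L; rewrite mem_iota => /andP[_ hL].
  by rewrite ifT ?Pstate_small //; lia.
have -> : s (c - x) = s (c - x).-1.+1 by congr s; lia.
rewrite (_ : s (c.+1 - (m + 2)) = s ((c - x).-1 - (m - x))); last by congr s; lia.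
rewrite mulnC IH; try lia.
rewrite (_ : (c - x).-1.+1 = c - x); last lia.
apply: eq_big_nat => L hL; rewrite ifT; last lia.
by congr (Pstate _ _ _ * s _ ^ 2); lia.
Qed.

Definition cross n := \sum_(m + 2 <= r < n.+1) Pstate m 0 (r - 1) * s (n - r) ^ 2.

Lemma cross_small n : n < m + 2 -> cross n = 0.
Proof. by move=> h; rewrite /cross big_geq. Qed.

Lemma mul_s_cross n : m + 2 <= n.+1 -> s (n.+1 - (m + 2)) * s n = cross n.+1.
Proof.
case: n => [|n] h; first lia.
rewrite (_ : n.+2 - (m + 2) = n - m); last lia.
rewrite mul_s_Pstate //; last lia.
rewrite (big_cat_nat _ (n := m)) //; last lia.
rewrite [LHS]/= big1_seq ?add0n; last first.
  by move=> L; rewrite mem_iota => /andP[_ hL]; rewrite Pstate_small //; lia.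
rewrite /cross big_nat_shift [in RHS]big_nat_shift.
rewrite (_ : n.+1 - m = n.+3 - (m + 2)); last lia.
apply: eq_big_nat => i hi.
rewrite (_ : i + (m + 2) - 1 = (i + m).+1); last lia.
by rewrite PstateS !subn0 add0n; congr (Pstate _ _ _ * s _ ^ 2); lia.
Qed.

Lemma sq_sS n : s n.+1 ^ 2 =
  s n ^ 2 + (if m + 2 <= n.+1 then s (n.+1 - (m + 2)) ^ 2 else 0) + 2 * cross n.+1.
Proof.
rewrite sS; case: ifP => h; last by rewrite cross_small ?addn0 //; lia.
by rewrite sqrnD -mul_s_cross // (mulnC (s n)).
Qed.

Definition sconv (f : nat -> nat) n := \sum_(0 <= k < n.+1) s k * f (n - k).

Lemma sconvS f n : sconv f n.+1 =
  f n.+1 + sconv f n + (if m + 2 <= n.+1 then sconv f (n.+1 - (m + 2)) else 0).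
Proof.
rewrite /sconv big_nat_recl // s0 mul1n subn0 -addnA; congr (_ + _).
under eq_bigr do rewrite sS mulnDl subSS.
rewrite big_split [LHS]/=; congr (_ + _).
case: ifP => h; last first.
  rewrite big1_seq // => k; rewrite mem_iota => /andP[_ hk].
  by rewrite ifF ?mul0n //; lia.
rewrite (big_cat_nat _ (n := m.+1)) //; last lia.
rewrite [LHS]/= big1_seq ?add0n; last first.
  by move=> k; rewrite mem_iota => /andP[_ hk]; rewrite ifF ?mul0n //; lia.
rewrite big_nat_shift (_ : n.+1 - m.+1 = (n.+1 - (m + 2)).+1); last lia.
apply: eq_big_nat => i hi; rewrite ifT; last lia.
by congr (s _ * f _); lia.
Qed.

Lemma sq_s_sconv n : s n ^ 2 = s n + 2 * sconv cross n.
Proof.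
elim/ltn_ind: n => [[|n]] IH.
  by rewrite /sconv big_nat1 s0 cross_small //; lia.
rewrite sq_sS sconvS sS IH //; case: ifP => h; last by rewrite !addn0; lia.
rewrite IH; lia.
Qed.

Lemma sq_s_Pstate n : s n ^ 2 = s n + 2 * \sum_(0 <= k < n - m - 1)
    \sum_(m + 2 <= r < (n - k).+1) Pstate m 0 (r - 1) * s k * s (n - k - r) ^ 2.
Proof.
rewrite sq_s_sconv /sconv (big_cat_nat _ (n := n - m - 1)) //; try lia.
rewrite [X in 2 * X]/= [\sum_(n - m - 1 <= i < n.+1) _]big1_seq ?addn0; last first.
  by move=> k; rewrite mem_iota => /andP[_ hk]; rewrite cross_small ?muln0 //; lia.
congr (_ + 2 * _); apply: eq_big_nat => k _.
rewrite /cross big_distrr; apply: eq_bigr => r _.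
by rewrite [RHS]mulnAC; apply: mulnC.
Qed.
End SquareIdentity.

Lemma big_ord_pred1_nat N a (P : pred nat) (F : nat -> nat) : P =1 pred1 a ->
  \sum_(v < N | P v) F v = if a < N then F a else 0.
Proof.
move=> Pa; case: ltnP => [aN | Na].
  by rewrite (big_pred1 (Ordinal aN)) // => v; rewrite /= Pa -val_eqE.
rewrite big_pred0 // => v; rewrite Pa; apply/negbTE.
by apply: contraTneq Na => <-; rewrite -ltnNge.
Qed.

Lemma big_ord_pred2_nat N a b (P : pred nat) (F : nat -> nat) :
  P =1 pred2 a b -> a != b ->
  \sum_(v < N | P v) F v = (if a < N then F a else 0) + (if b < N then F b else 0).
Proof.
move=> Pab ab; rewrite (bigID (fun v : 'I_N => val v == a)) /=.
congr (_ + _).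
  apply: (@big_ord_pred1_nat N a (fun v => P v && (v == a))) => v /=.
  by rewrite Pab /=; lia.
apply: (@big_ord_pred1_nat N b (fun v => P v && (v != a))) => v /=.
by rewrite Pab /=; lia.
Qed.

Definition stepW m i j := (j == i + m) || (j.+1 == i) || (j.+2 == i).

Lemma mem_W m i j :
  ((j%:Z - i%:Z)%R \in [:: (-2)%Z; (-1)%Z; Posz m]) = stepW m i j.
Proof. rewrite /stepW !in_cons in_nil orbF; lia. Qed.

Section Completions.
Variables m N : nat.

(* The last conjunct discards the branches in which the value T-2 can no longer
   be used. *)
Definition admissible T (u : seq nat) v :=
  [&& stepW m T v, v \notin u & (T < 2) || (T - 2 \in u) || (v.+2 == T)].

Fixpoint completions k T u :=
  if k is k'.+1 then \sum_(v < N | admissible T u v) completions k' T.+1 (rcons u v)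
  else 1.

(* After positions 0..T-1 received the values u, [shape1 T x u] says that u is
   [0, T) if x = 0 and [0, T-1) + {T-1+x} otherwise, and [shape2 T a b u] that u is
   [0, T-2) + {T-1+a, T-1+b}.  Up to forced moves no other state is reachable. *)
Definition shape1 T x (u : seq nat) :=
  forall y, (y \in u) = (y.+1 < T) || (y.+1 == T + x).

Definition shape2 T a b (u : seq nat) :=
  forall y, (y \in u) = [|| y.+2 < T, y.+1 == T + a | y.+1 == T + b].

Definition completions_spec k := forall T u, T + k = N ->
  (forall x, x <= m -> x <= k -> (x == 0) || (0 < T) -> shape1 T x u ->
     completions k T u = Pstate m x k) /\
  (forall a b, 1 < T -> a < b -> b <= m -> b <= k -> shape2 T a b u ->
     completions k T u = Pstate m (b - a - 1) (k - a - 1)).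

Lemma completions_pred1 k T u a : admissible T u =1 pred1 a ->
  completions k.+1 T u = if a < N then completions k T.+1 (rcons u a) else 0.
Proof. exact: (big_ord_pred1_nat _ (fun v => completions k T.+1 (rcons u v))). Qed.

Lemma completions_pred2 k T u a b : admissible T u =1 pred2 a b -> a != b ->
  completions k.+1 T u = (if a < N then completions k T.+1 (rcons u a) else 0)
                         + (if b < N then completions k T.+1 (rcons u b) else 0).
Proof. exact: (big_ord_pred2_nat _ (fun v => completions k T.+1 (rcons u v))). Qed.

Lemma completions_shape1 k : completions_spec k -> forall T u x, T + k.+1 = N ->
  x <= m -> x <= k.+1 -> (x == 0) || (0 < T) -> shape1 T x u ->
  completions k.+1 T u = Pstate m x k.+1.
Proof.
move=> IH T u [|e] hN xm xk hT hu.
  rewrite (@completions_pred1 _ _ _ (T + m)); last first.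
    by move=> v; rewrite /admissible /stepW !hu /=; lia.
  rewrite Pstate0S; case: ifP => hmN; last by rewrite Pstate_small //; lia.
  apply: (proj1 (IH _ _ _)) => //; try lia.
  by move=> y; rewrite mem_rcons in_cons hu; lia.
rewrite (@completions_pred2 _ _ _ (T - 1) (T + m)); first last.
- by apply/eqP; lia.
- by move=> v; rewrite /admissible /stepW !hu /=; lia.
rewrite PstateS; congr (_ + _).
  rewrite ifT; last lia.
  apply: (proj1 (IH _ _ _)) => //; try lia.
  by move=> y; rewrite mem_rcons in_cons hu; lia.
case: ifP => hmN; last by case: ifP => // ek; rewrite Pstate_small //; lia.
rewrite ifT; last lia.
rewrite (proj2 (IH _ _ _) e m) //; try lia.
  by congr Pstate; lia.
by move=> y; rewrite mem_rcons in_cons hu; lia.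
Qed.

Lemma completions_shape2 k : completions_spec k -> forall T u a b, T + k.+1 = N ->
  1 < T -> a < b -> b <= m -> b <= k.+1 -> shape2 T a b u ->
  completions k.+1 T u = Pstate m (b - a - 1) (k.+1 - a - 1).
Proof.
move=> IH T u a b hN hT ab bm bk hu.
rewrite (@completions_pred1 _ _ _ (T - 2)); last first.
  by move=> v; rewrite /admissible /stepW !hu /=; lia.
rewrite ifT; last lia.
case: a ab hu => [|a] ab hu.
  rewrite (proj1 (IH _ _ _) (b - 1)) //; try lia.
    by congr Pstate; lia.
  by move=> y; rewrite mem_rcons in_cons hu; lia.
rewrite (proj2 (IH _ _ _) a (b - 1)) //; try lia.
  by congr Pstate; lia.
by move=> y; rewrite mem_rcons in_cons hu; lia.
Qed.

Lemma completions_shapes k : completions_spec k.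
Proof.
elim: k => [|k IH] T u hN; split.
- by case=> // _ _ _ _; rewrite Pstate0.
- by move=> a b _ ab _ bk; lia.
- by move=> x; apply: completions_shape1.
- by move=> a b; apply: completions_shape2.
Qed.

Lemma completions_Pstate : completions N 0 [::] = Pstate m 0 N.
Proof.
by apply: (proj1 (@completions_shapes N 0 [::] (add0n N))) => // y; rewrite in_nil.
Qed.

End Completions.

Section PrefixPerms.
Variables m N : nat.

Definition perms_with_prefix T (p : seq nat) : {set 'S_N} :=
  [set s : 'S_N | [forall i : 'I_N,
     if i < T then s i == nth 0 p i :> nat else stepW m i (s i)]].

Lemma card_perms_with_full_prefix p : size p = N -> uniq p ->
  all (fun x => x < N) p -> #|perms_with_prefix N p| = 1.
Proof.
move=> hs hu ha.
have pN (i : 'I_N) : nth 0 p i < N by apply: (all_nthP 0 ha); rewrite hs.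
have p_inj : injective (fun i => Ordinal (pN i)).
  move=> i j /(congr1 val) /= /eqP; rewrite nth_uniq ?hs // => /eqP.
  exact: val_inj.
apply/eqP/cards1P; exists (perm p_inj); apply/setP => s.
rewrite !inE; apply/forallP/eqP => [hs1 | -> i].
  apply/permP => i; apply: val_inj; rewrite permE /=.
  by move: (hs1 i); rewrite ltn_ord => /eqP.
by rewrite ltn_ord permE.
Qed.

Lemma perms_with_prefix_admissible T p s (hT : T < N) : size p = T ->
  s \in perms_with_prefix T p -> admissible m T p (s (Ordinal hT)).
Proof.
set t := Ordinal hT; move=> hs; rewrite inE => /forallP hs1.
apply/and3P; split.
- by have := hs1 t; rewrite /= ltnn.
- apply/negP => vp.
  have hj : index (s t : nat) p < T by rewrite -hs index_mem.
  have := hs1 (Ordinal (ltn_trans hj hT)); rewrite /= hj nth_index // => /eqP sj.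
  have /perm_inj/(congr1 val) : s (Ordinal (ltn_trans hj hT)) = s t by apply: val_inj.
  by move=> /=; lia.
case: (ltnP T 2) => hT2 //.
have hw : T - 2 < N by lia.
set j := (s^-1)%g (Ordinal hw).
have sj : s j = Ordinal hw by rewrite permKV.
have := hs1 j; case: ifP => hjT.
  by rewrite sj /= => /eqP ->; rewrite mem_nth ?hs.
rewrite sj /stepW /= => hc.
have -> : t = j by apply: val_inj => /=; lia.
by apply/orP; right; rewrite sj /=; lia.
Qed.

Lemma perms_with_prefix_rcons T p v (hT : T < N) : size p = T -> stepW m T v ->
  perms_with_prefix T.+1 (rcons p v)
  = [set s in perms_with_prefix T p | s (Ordinal hT) == v :> nat].
Proof.
move=> hs hv; apply/setP => s; rewrite !inE.
have split_at_T (i : 'I_N) :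
  (if i < T.+1 then s i == nth 0 (rcons p v) i :> nat else stepW m i (s i))
  = (if i < T then s i == nth 0 p i :> nat else stepW m i (s i))
    && ((i == T :> nat) ==> (s i == v :> nat)).
  rewrite ltnS leq_eqVlt nth_rcons hs.
  case: (ltngtP i T) => [_|_|iT] /=; rewrite ?andbT //.
  by rewrite andbC; case: eqP => // ->; rewrite iT hv.
apply/forallP/andP => [h | [/forallP h /eqP hsv] i].
  split; first by apply/forallP => i; move: (h i); rewrite split_at_T => /andP[].
  by move: (h (Ordinal hT)); rewrite split_at_T /= eqxx => /andP[_].
rewrite split_at_T h /=; apply/implyP => /eqP iT.
by rewrite (_ : i = Ordinal hT) ?hsv //; apply: val_inj.
Qed.

Lemma card_perms_with_prefix k T p : T + k = N -> size p = T -> uniq p ->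
  all (fun x => x < N) p -> #|perms_with_prefix T p| = completions m N k T p.
Proof.
elim: k T p => [|k IH] T p hN hs hu ha.
  by rewrite addn0 in hN; rewrite hN in hs *; exact: card_perms_with_full_prefix.
have hT : T < N by lia.
rewrite /= -sum1_card (partition_big (fun s : 'S_N => s (Ordinal hT)) predT) //=.
rewrite [RHS]big_mkcond /=; apply: eq_bigr => v _; rewrite sum1dep_card.
case: ifP => hv.
  have [hW hvp _] := and3P hv.
  rewrite -IH ?size_rcons ?hs ?rcons_uniq ?hvp ?all_rcons ?ltn_ord ?ha //; last lia.
  by rewrite (perms_with_prefix_rcons hT hs hW).
apply: eq_card0 => s; rewrite inE; apply/negbTE/andP => -[hs1 /eqP hsv].
by move: (perms_with_prefix_admissible hT hs hs1); rewrite hsv hv.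
Qed.

End PrefixPerms.

Lemma Pperm_Pstate m N : Pperm [:: (-2)%Z; (-1)%Z; Posz m] N = Pstate m 0 N.
Proof.
rewrite /Pperm (_ : [set _ | _] = @perms_with_prefix m N 0 [::]); last first.
  by apply/setP => s; rewrite !inE; apply: eq_forallb => i; rewrite mem_W.
by rewrite (@card_perms_with_prefix m N N) ?completions_Pstate.
Qed.

Theorem mainTheorem9 (m n : nat) :
  (sseq 1 (m + 2) n ^ 2 =
   sseq 1 (m + 2) n
   + 2 * \sum_(0 <= k < n - m - 1)
           \sum_(m + 2 <= r < (n - k).+1)
              Pperm [:: (-2)%Z; (-1)%Z; Posz m] (r - 1)
              * sseq 1 (m + 2) k * sseq 1 (m + 2) (n - k - r) ^ 2)%N.
Proof.
rewrite sq_s_Pstate; congr (_ + 2 * _).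
apply: eq_big_nat => k _; apply: eq_big_nat => r _.
by rewrite Pperm_Pstate.
Qed.
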